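(* Let $\mathcal{G}_{\curlywedge}=(G,o,\curlywedge,R_1,\ldots,R_n)$ be a functional Menger $\curlywedge$-algebra of rank $n$ and let $H$ be a nonempty subset of $G$. Then $H$ is a stabilizer of $\mathcal{G}_{\curlywedge}$ if and only if $H$ is stable, $\curlywedge$-stable and $v$-unitary, and $R_iH\subseteq H$ for every $i\in\{1,\ldots,n\}$.
   Context: A functional Menger system of rank $n$ is a nonempty set $G$ with an $(n+1)$-ary operation $o\colon(x_0,x_1,\ldots,x_n)\mapsto x_0[x_1\ldots x_n]$ and unary operations $R_1,\ldots,R_n$ satisfying, for all $i,k\in\{1,\ldots,n\}$ and all elements: (A1) $x[y_1\ldots y_n][z_1\ldots z_n]=x[y_1[z_1\ldots z_n]\ldots y_n[z_1\ldots z_n]]$; (A2) $x[R_1x\ldots R_nx]=x$; (A3) $x[\bar u\,|_iz][R_1y\ldots R_ny]=x[\bar u\,|_iz[R_1y\ldots R_ny]]$; (A4) $R_ix[R_1y\ldots R_ny]=(R_ix)[R_1y\ldots R_ny]$; (A5) $x[R_1y\ldots R_ny][R_1z\ldots R_nz]=x[R_1z\ldots R_nz][R_1y\ldots R_ny]$; (A6) $R_ix[y_1\ldots y_n]=R_i(R_kx)[y_1\ldots y_n]$; (A7) $(R_ix)[y_1\ldots y_n]=y_i[R_1(x[y_1\ldots y_n])\ldots R_n(x[y_1\ldots y_n])]$. Here $x[\bar u\,|_iz]$ denotes $x[u_1\ldots u_{i-1}\,z\,u_{i+1}\ldots u_n]$, and $R_ix[\ldots]$ means $R_i(x[\ldots])$.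 A functional Menger $\curlywedge$-algebra of rank $n$ is an algebra $(G,o,\curlywedge,R_1,\ldots,R_n)$ such that $(G,o,R_1,\ldots,R_n)$ is a functional Menger system of rank $n$, $(G,\curlywedge)$ is a semilattice, and (A8) $x\curlywedge y[R_1z\ldots R_nz]=(x\curlywedge y)[R_1z\ldots R_nz]$; (A9) $x\curlywedge y=x[R_1(x\curlywedge y)\ldots R_n(x\curlywedge y)]$; (A10) $(x\curlywedge y)[z_1\ldots z_n]=x[z_1\ldots z_n]\curlywedge y[z_1\ldots z_n]$. For a set $A$, $\mathcal F(A^n,A)$ is the set of partial maps $A^n\to A$ (viewed as subsets of $A^n\times A$). The Menger composition $f[g_1\ldots g_n]$ is the partial function $\bar a\mapsto f(g_1(\bar a),\ldots,g_n(\bar a))$ (defined exactly when the right side is defined), and $\mathcal R_if$ is the partial function with the same domain as $f$ given by $(a_1,\ldots,a_n)\mapsto a_i$. A representation of $\mathcal G_\curlywedge$ by $n$-place functions on a set $A$ is a map $P\colon G\to\mathcal F(A^n,A)$ with $P(x[y_1\ldots y_n])=P(x)[P(y_1)\ldots P(y_n)]$, $P(R_ix)=\mathcal R_iP(x)$ and $P(x\curlywedge y)=P(x)\cap P(y)$. A nonempty $H\subseteq G$ is a stabilizer of $\mathcal G_\curlywedge$ if there exist such a representation $P$ on some set $A$ and a point $a\in A$ with $H=\{g\in G: P(g)(a,\ldots,a)=a\}$. A nonempty $H\subseteq G$ is stable if $x,y_1,\ldots,y_n\in H$ imply $x[y_1\ldots y_n]\in H$; $\curlywedge$-stable if $x,y\in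 H$ imply $x\curlywedge y\in H$; $v$-unitary if $x[y_1\ldots y_n]\in H$ and $y_1,\ldots,y_n\in H$ imply $x\in H$. *)

From mathcomp Require Import all_boot.
Set Implicit Arguments. Unset Strict Implicit. Unset Printing Implicit Defensive.

(* Indices i in {1,...,n} are encoded 0-based as i : 'I_n.
   An n-tuple of elements of G is a function 'I_n -> G.
   The Menger operation x[y_1 ... y_n] is  o x y  with y : 'I_n -> G. *)

Section MengerAlgebra.
Variables (n : nat) (G : Type).
Variables (o : G -> ('I_n -> G) -> G) (meet : G -> G -> G) (R : 'I_n -> G -> G).

Definition Rs (y : G) : 'I_n -> G := fun j => R j y.

Definition upd (u : 'I_n -> G) (i : 'I_n) (z : G) : 'I_n -> G :=
  fun j => if j == i then z else u j.

Definition functional_menger_system : Prop :=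
  (forall x (y z : 'I_n -> G), o (o x y) z = o x (fun j => o (y j) z)) /\
  (forall x, o x (Rs x) = x) /\
  (forall x (u : 'I_n -> G) i z y,
              o (o x (upd u i z)) (Rs y) = o x (upd u i (o z (Rs y)))) /\
  (forall i x y, R i (o x (Rs y)) = o (R i x) (Rs y)) /\
  (forall x y z, o (o x (Rs y)) (Rs z) = o (o x (Rs z)) (Rs y)) /\
  (forall i k x (y : 'I_n -> G), R i (o x y) = R i (o (R k x) y)) /\
  (forall i x (y : 'I_n -> G), o (R i x) y = o (y i) (Rs (o x y))).

Definition semilattice : Prop :=
  (forall x y z, meet x (meet y z) = meet (meet x y) z) /\
  (forall x y, meet x y = meet y x) /\
  (forall x, meet x x = x).

Definition functional_menger_meet_algebra : Prop :=
  functional_menger_system /\ semilattice /\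
  (forall x y z, meet x (o y (Rs z)) = o (meet x y) (Rs z)) /\
  (forall x y, meet x y = o x (Rs (meet x y))) /\
  (forall x y (z : 'I_n -> G), o (meet x y) z = meet (o x z) (o y z)).

Definition stable (H : G -> Prop) : Prop :=
  forall x (y : 'I_n -> G), H x -> (forall i, H (y i)) -> H (o x y).
Definition meet_stable (H : G -> Prop) : Prop :=
  forall x y, H x -> H y -> H (meet x y).
Definition v_unitary (H : G -> Prop) : Prop :=
  forall x (y : 'I_n -> G), H (o x y) -> (forall i, H (y i)) -> H x.
Definition R_closed (H : G -> Prop) : Prop :=
  forall i x, H x -> H (R i x).

End MengerAlgebra.

(* Partial n-place functions A^n -> A, as option-valued functions on
   n-tuples 'I_n -> A.  Its graph {(a,b) | f a = Some b} is the subset of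
   A^n x A of the paper. *)
Definition pfun (n : nat) (A : Type) := ('I_n -> A) -> option A.

Definition mcomp n A (f : pfun n A) (g : 'I_n -> pfun n A) : pfun n A :=
  fun a => if [forall i, isSome (g i a)]
           then f (fun i => odflt (a i) (g i a)) else None.

Definition Rproj n A (i : 'I_n) (f : pfun n A) : pfun n A :=
  fun a => if f a is Some _ then Some (a i) else None.

Definition is_intersection n A (h f g : pfun n A) : Prop :=
  forall a b, h a = Some b <-> (f a = Some b /\ g a = Some b).

(* Representation of (G, o, meet, R) by n-place functions on A
   (the equalities of partial maps are stated pointwise, i.e. as equality of
   graphs). *)
Definition representation n (G : Type) (o : G -> ('I_n -> G) -> G)
  (meet : G -> G -> G) (R : 'I_n -> G -> G) (A : Type) (P : G -> pfun n A) : Prop :=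
  (forall x (y : 'I_n -> G) a, P (o x y) a = mcomp (P x) (fun j => P (y j)) a) /\
  (forall i x a, P (R i x) a = Rproj i (P x) a) /\
  (forall x y, is_intersection (P (meet x y)) (P x) (P y)).

Definition stabilizer n (G : Type) (o : G -> ('I_n -> G) -> G)
  (meet : G -> G -> G) (R : 'I_n -> G -> G) (H : G -> Prop) : Prop :=
  exists (A : Type) (P : G -> pfun n A) (a : A),
    representation o meet R P /\
    forall g, H g <-> P g (fun _ => a) = Some a.

(* Necessity is a direct computation in the representation.  For sufficiency,
   let u ~ v mean that R_i(u /\ v) lies in H for every i.  Using the axioms
   and the closure properties of H, ~ is a partial equivalence relation which
   is a congruence for composition, and H is one of its classes.  Represent
   f in G on the set of ~-classes by sending (t_1, ..., t_n) to the class of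
   f[g_1 ... g_n], for representatives g_i of the t_i, whenever this element
   is in the domain of ~.  Its stabilizer at the class of H is H itself. *)

From mathcomp Require Import all_boot.
From Stdlib Require Import ClassicalEpsilon FunctionalExtensionality.
From Stdlib Require Import PropExtensionality ProofIrrelevance.

Set Implicit Arguments. Unset Strict Implicit. Unset Printing Implicit Defensive.

Definition fixes n A (f : pfun n A) (a : A) : Prop := f (fun _ => a) = Some a.

Lemma mcomp_fixed n A (f : pfun n A) (g : 'I_n -> pfun n A) (a : A) :
  (forall i, fixes (g i) a) -> mcomp f g (fun _ => a) = f (fun _ => a).
Proof.
move=> ga; rewrite /mcomp.
have -> : [forall i, isSome (g i (fun _ => a))] by apply/forallP => i; rewrite ga.
by congr f; apply: functional_extensionality => i; rewrite ga.
Qed.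

Lemma Rproj_fixes n A (i : 'I_n) (f : pfun n A) (a : A) :
  fixes f a -> fixes (Rproj i f) a.
Proof. by rewrite /fixes /Rproj => ->. Qed.

Lemma intersection_fixes n A (h f g : pfun n A) (a : A) :
  is_intersection h f g -> fixes f a -> fixes g a -> fixes h a.
Proof. by move=> hfg fa ga; apply/hfg. Qed.

Lemma stabilizer_closed n G (o : G -> ('I_n -> G) -> G) (meet : G -> G -> G)
    (R : 'I_n -> G -> G) (H : G -> Prop) :
  stabilizer o meet R H ->
  stable o H /\ meet_stable meet H /\ v_unitary o H /\ R_closed R H.
Proof.
move=> [A [P [a [[Pcomp [PR Pmeet]] HP]]]].
have P_comp_fixed x y : (forall i, H (y i)) ->
    P (o x y) (fun _ => a) = P x (fun _ => a).
  by move=> Hy; rewrite Pcomp mcomp_fixed // => i; apply/HP.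
split; [|split; [|split]].
- by move=> x y /HP Hx Hy; apply/HP; rewrite P_comp_fixed.
- by move=> x y /HP Hx /HP Hy; apply/HP; exact: intersection_fixes (Pmeet x y) Hx Hy.
- by move=> x y /HP Hxy Hy; apply/HP; rewrite -(P_comp_fixed x y).
- by move=> i x /HP Hx; apply/HP; rewrite /fixes PR; exact: Rproj_fixes.
Qed.

Lemma upd_id n G (u : 'I_n -> G) (i : 'I_n) : upd u i (u i) = u.
Proof. by apply: functional_extensionality => j; rewrite /upd; case: eqP => [->|]. Qed.

Section ClassRepresentation.
Variables (n : nat) (G : Type) (o : G -> ('I_n -> G) -> G) (meet : G -> G -> G).
Variable R : 'I_n -> G -> G.
Hypothesis n_gt0 : 0 < n.
Hypothesis compA : forall x (y z : 'I_n -> G), o (o x y) z = o x (fun j => o (y j) z).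
Hypothesis comp_upd_Rs : forall x (u : 'I_n -> G) i z y,
  o (o x (upd u i z)) (Rs R y) = o x (upd u i (o z (Rs R y))).
Hypothesis R_comp_Rs : forall i x y, R i (o x (Rs R y)) = o (R i x) (Rs R y).
Hypothesis R_compR : forall i k x (y : 'I_n -> G), R i (o x y) = R i (o (R k x) y).
Hypothesis R_comp : forall i x (y : 'I_n -> G), o (R i x) y = o (y i) (Rs R (o x y)).
Hypothesis meetA : forall x y z, meet x (meet y z) = meet (meet x y) z.
Hypothesis meetC : forall x y, meet x y = meet y x.
Hypothesis meetxx : forall x, meet x x = x.
Hypothesis meet_comp_Rs : forall x y z, meet x (o y (Rs R z)) = o (meet x y) (Rs R z).
Hypothesis meet_RsE : forall x y, meet x y = o x (Rs R (meet x y)).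
Hypothesis comp_meet : forall x y (z : 'I_n -> G), o (meet x y) z = meet (o x z) (o y z).

Variable H : G -> Prop.
Hypothesis H_stable : stable o H.
Hypothesis H_meet_stable : meet_stable meet H.
Hypothesis H_v_unitary : v_unitary o H.
Hypothesis H_R_closed : R_closed R H.

(* [hdom u] says that u is defined at the point to be stabilized, and [hrel]
   identifies elements taking the same value there. *)
Definition hdom (u : G) : Prop := forall i, H (R i u).
Definition hrel (u v : G) : Prop := hdom (meet u v).

Lemma hdom_of_H_comp_Rs u v : H (o u (Rs R v)) -> hdom v.
Proof.
move=> Huv j; apply: (H_v_unitary (y := Rs R (o u (Rs R v)))); last first.
  by move=> k; apply: H_R_closed.
have := R_comp j u (Rs R v); rewrite {2}/Rs => <-.
by rewrite -R_comp_Rs; apply: H_R_closed.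
Qed.

Lemma H_of_H_comp_Rs u v : H (o u (Rs R v)) -> H u.
Proof. by move=> Huv; apply: H_v_unitary Huv (hdom_of_H_comp_Rs Huv). Qed.

Lemma hdom_comp_Rs z w : hdom z -> hdom w -> hdom (o z (Rs R w)).
Proof. by move=> Dz Dw i; rewrite R_comp_Rs; apply: H_stable. Qed.

Lemma hdom_comp_Rs_l z w : hdom (o z (Rs R w)) -> hdom z.
Proof. by move=> Dzw i; apply: (@H_of_H_comp_Rs _ w); rewrite -R_comp_Rs. Qed.

Lemma hdom_comp_Rs_r z w : hdom (o z (Rs R w)) -> hdom w.
Proof.
move=> Dzw; apply: (@hdom_of_H_comp_Rs (R (Ordinal n_gt0) z)).
by rewrite -R_comp_Rs.
Qed.

Lemma hdom_comp_arg x (y : 'I_n -> G) j : hdom (o x y) -> hdom (y j).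
Proof.
move=> Dxy i; apply: (@H_of_H_comp_Rs _ (o x y)).
by rewrite -R_comp_Rs -R_comp -R_compR.
Qed.

Lemma hrelC u v : hrel u v -> hrel v u.
Proof. by rewrite /hrel meetC. Qed.

Lemma hrel_hdom u v : hrel u v -> hdom u.
Proof. by rewrite /hrel meet_RsE => /hdom_comp_Rs_l. Qed.

Lemma hrel_refl u : hdom u -> hrel u u.
Proof. by rewrite /hrel meetxx. Qed.

Lemma hrel_trans u v w : hrel u v -> hrel v w -> hrel u w.
Proof.
move=> Euv Evw; have := hdom_comp_Rs Euv Evw.
by rewrite -meet_comp_Rs -meet_RsE (meetC v) meetA meet_RsE => /hdom_comp_Rs_l.
Qed.

Lemma hrel_meetl u v : hrel u v -> hrel (meet u v) u.
Proof. by move=> Euv; rewrite /hrel meetC meetA meetxx. Qed.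

Lemma hrel_comp_Rs z w : hdom (o z (Rs R w)) -> hrel (o z (Rs R w)) z.
Proof. by rewrite /hrel meetC meet_comp_Rs meetxx. Qed.

(* Composing either side with R(g /\ g') gives f[u |_i (g /\ g')]. *)
Lemma hrel_comp_upd f u i g g' :
  hrel g g' -> hdom (o f (upd u i g)) -> hrel (o f (upd u i g)) (o f (upd u i g')).
Proof.
move=> Egg' Df.
have fm z : o z (Rs R (meet g g')) = meet g g' ->
    o (o f (upd u i z)) (Rs R (meet g g')) = o f (upd u i (meet g g')).
  by move=> zm; rewrite comp_upd_Rs zm.
have gm : o g (Rs R (meet g g')) = meet g g' by rewrite -meet_RsE.
have g'm : o g' (Rs R (meet g g')) = meet g g' by rewrite meetC -meet_RsE.
have Dfm := hdom_comp_Rs Df Egg'.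
have Dfm' : hdom (o (o f (upd u i g')) (Rs R (meet g g'))).
  by rewrite (fm _ g'm) -(fm _ gm).
apply: hrel_trans (hrelC (hrel_comp_Rs Dfm)) _.
by rewrite (fm _ gm) -(fm _ g'm); exact: hrel_comp_Rs.
Qed.

Lemma hrel_comp f (g g' : 'I_n -> G) :
  (forall i, hrel (g i) (g' i)) -> hdom (o f g) -> hrel (o f g) (o f g').
Proof.
move=> gg' Dfg; have Dg i : hdom (g i) := hdom_comp_arg i Dfg.
(* Replace the arguments one at a time, in increasing order of index. *)
suff /(_ n (leqnn n) g' gg') : forall k, k <= n -> forall h : 'I_n -> G,
    (forall i, hrel (g i) (h i)) -> (forall i : 'I_n, k <= i -> h i = g i) ->
    hrel (o f g) (o f h).
  by apply=> i; rewrite leqNgt ltn_ord.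
elim=> [_ h _ hg | k IHk kn h gh hg].
  have -> : h = g by apply: functional_extensionality => i; exact: hg.
  exact: hrel_refl.
pose i := Ordinal kn.
have Efh' : hrel (o f g) (o f (upd h i (g i))).
  apply: IHk (ltnW kn) _ _ _ => j; rewrite /upd; case: eqP => [-> | ji].
  - exact: hrel_refl.
  - exact: gh.
  - by [].
  - rewrite leq_eqVlt => /predU1P [kj|]; last exact: hg.
    by case: ji; apply: val_inj.
have := hrel_comp_upd (gh i) (hrel_hdom (hrelC Efh')).
by rewrite upd_id; apply: hrel_trans.
Qed.

Definition hclass (u : G) : G -> Prop := fun x => hrel x u.
(* The empty class of the elements outside [hdom] is allowed, so that [cl] is
   total. *)
Definition hquot : Type := {t : G -> Prop | exists u, t = hclass u}.
Definition cl (u : G) : hquot := exist _ (hclass u) (ex_intro _ u erefl).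
Definition repr (t : hquot) : G :=
  proj1_sig (constructive_indefinite_description _ (proj2_sig t)).

Lemma cl_repr t : cl (repr t) = t.
Proof.
case: t => t tP; rewrite /repr /=.
case: (constructive_indefinite_description _ tP) => u /= tu.
exact: subset_eq_compat (esym tu).
Qed.

Lemma cl_eq u v : hrel u v -> cl u = cl v.
Proof.
move=> Euv; apply: subset_eq_compat; apply: functional_extensionality => x.
apply: propositional_extensionality.
by split=> Ex; [exact: hrel_trans Ex Euv | exact: hrel_trans Ex (hrelC Euv)].
Qed.

Lemma cl_inj u v : hdom u -> cl u = cl v -> hrel u v.
Proof.
move=> Du /(f_equal (@proj1_sig _ _)) /= uv.
by have : hclass u u := hrel_refl Du; rewrite uv.
Qed.

Lemma hrel_repr_cl u : hdom u -> hrel u (repr (cl u)).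
Proof. by move=> Du; apply: cl_inj Du _; rewrite cl_repr. Qed.

Definition eval_cl (u : G) : option hquot :=
  if excluded_middle_informative (hdom u) then Some (cl u) else None.

Lemma eval_cl_dom u : hdom u -> eval_cl u = Some (cl u).
Proof. by rewrite /eval_cl; case: excluded_middle_informative. Qed.

Lemma eval_cl_undom u : ~ hdom u -> eval_cl u = None.
Proof. by rewrite /eval_cl; case: excluded_middle_informative. Qed.

Lemma eval_cl_Some u b : eval_cl u = Some b <-> hdom u /\ cl u = b.
Proof.
rewrite /eval_cl; case: excluded_middle_informative => Du.
  by split=> [[]|[_ ->]].
by split=> [|[]].
Qed.

Lemma eval_cl_comp f (g g' : 'I_n -> G) :
  (forall i, hrel (g i) (g' i)) -> eval_cl (o f g) = eval_cl (o f g').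
Proof.
move=> gg'; case: (classic (hdom (o f g))) => [Dfg | nDfg].
  have Efg := hrel_comp gg' Dfg.
  by rewrite !eval_cl_dom ?(cl_eq Efg) //; exact: hrel_hdom (hrelC Efg).
rewrite !eval_cl_undom // => Dfg'; apply: nDfg.
exact: hrel_hdom (hrelC (hrel_comp (fun i => hrelC (gg' i)) Dfg')).
Qed.

Lemma eval_cl_meet u v b :
  eval_cl (meet u v) = Some b <-> eval_cl u = Some b /\ eval_cl v = Some b.
Proof.
rewrite !eval_cl_Some; split=> [[Euv <-] | [[Du <-] [Dv vu]]].
  have Evu := hrelC Euv.
  split; split; [exact: hrel_hdom Euv | exact: esym (cl_eq (hrel_meetl Euv)) |
                 exact: hrel_hdom Evu | ].
  by rewrite meetC; exact: esym (cl_eq (hrel_meetl Evu)).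
have Euv : hrel u v := cl_inj Du (esym vu).
by split; [|apply: cl_eq; apply: hrel_meetl].
Qed.

Definition class_rep (f : G) : pfun n hquot :=
  fun t => eval_cl (o f (fun i => repr (t i))).

Lemma class_rep_tuple f t (g : 'I_n -> G) :
  (forall i, hdom (g i)) -> (forall i, t i = cl (g i)) -> class_rep f t = eval_cl (o f g).
Proof.
move=> Dg tg; apply: eval_cl_comp => i.
by rewrite tg; exact: hrelC (hrel_repr_cl (Dg i)).
Qed.

Lemma class_rep_comp x y t :
  class_rep (o x y) t = mcomp (class_rep x) (fun j => class_rep (y j)) t.
Proof.
rewrite /mcomp {1}/class_rep compA; set g := fun i => repr (t i).
case: (classic (forall j, hdom (o (y j) g))) => [Dy | /not_all_ex_not [j nDj]].
  have yE j : class_rep (y j) t = Some (cl (o (y j) g)) by exact: eval_cl_dom.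
  have -> : [forall j, isSome (class_rep (y j) t)] by apply/forallP => j; rewrite yE.
  have -> : (fun j => odflt (t j) (class_rep (y j) t)) = fun j => cl (o (y j) g).
    by apply: functional_extensionality => j; rewrite yE.
  by rewrite (class_rep_tuple _ Dy).
have -> : [forall j, isSome (class_rep (y j) t)] = false.
  by apply/negbTE/forallPn; exists j; rewrite /class_rep eval_cl_undom.
by rewrite eval_cl_undom // => /(hdom_comp_arg j).
Qed.

Lemma class_rep_R i x t : class_rep (R i x) t = Rproj i (class_rep x) t.
Proof.
rewrite /Rproj /class_rep R_comp; set g := fun j => repr (t j).
case: (classic (hdom (o x g))) => [Dx | nDx].
  have Dc := hdom_comp_Rs (hdom_comp_arg i Dx) Dx.
  by rewrite !eval_cl_dom //= (cl_eq (hrel_comp_Rs Dc)) cl_repr.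
by rewrite !eval_cl_undom // => /hdom_comp_Rs_r.
Qed.

Lemma class_rep_meet x y :
  is_intersection (class_rep (meet x y)) (class_rep x) (class_rep y).
Proof. by move=> t b; rewrite /class_rep comp_meet; exact: eval_cl_meet. Qed.

Lemma H_hrelE h g : H h -> (H g <-> hrel g h).
Proof.
move=> Hh; split=> [Hg i | Egh]; first by apply: H_R_closed; apply: H_meet_stable.
apply: (@H_of_H_comp_Rs _ (meet g h)); rewrite -meet_RsE meetC meet_RsE.
by apply: H_stable => // i; rewrite /Rs meetC; exact: Egh.
Qed.

Lemma class_rep_fixes h g : H h -> (H g <-> fixes (class_rep g) (cl h)).
Proof.
move=> Hh; have Dh : hdom h by move=> i; apply: H_R_closed.
rewrite /fixes (@class_rep_tuple g _ (fun _ => h)) // eval_cl_Some.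
split=> [Hg | [Dgh gh]].
  have Egh : hrel (o g (fun _ => h)) h by apply/H_hrelE => //; apply: H_stable.
  by split; [exact: hrel_hdom Egh | exact: cl_eq].
by apply: (H_v_unitary (y := fun _ => h)) => //; apply/(H_hrelE _ Hh); exact: cl_inj.
Qed.

Lemma stabilizer_of_closed h : H h -> stabilizer o meet R H.
Proof.
move=> Hh; exists hquot, class_rep, (cl h); split; last by move=> g; exact: class_rep_fixes.
split; [exact: class_rep_comp | split; [exact: class_rep_R | exact: class_rep_meet]].
Qed.

End ClassRepresentation.

Theorem theorem5 (n : nat) (G : Type) (o : G -> ('I_n -> G) -> G)
  (meet : G -> G -> G) (R : 'I_n -> G -> G) (H : G -> Prop) :
  0 < n ->
  functional_menger_meet_algebra o meet R ->
  (exists h, H h) ->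
  (stabilizer o meet R H <->
   (stable o H /\ meet_stable meet H /\ v_unitary o H /\ R_closed R H)).
Proof.
move=> n_gt0 [[compA [_ [comp_upd_Rs [R_comp_Rs [_ [R_compR R_comp]]]]]]
  [[meetA [meetC meetxx]] [meet_comp_Rs [meet_RsE comp_meet]]]] [h Hh].
split=> [|[H_stable [H_meet_stable [H_v_unitary H_R_closed]]]].
  exact: stabilizer_closed.
exact: (stabilizer_of_closed n_gt0 compA comp_upd_Rs R_comp_Rs R_compR R_comp
          meetA meetC meetxx meet_comp_Rs meet_RsE comp_meet
          H_stable H_meet_stable H_v_unitary H_R_closed Hh).
Qed.
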